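(* Let $r\ge 3$ be an integer and let $x>1$ be a real number such that $\binom{x}{2}=\frac{x(x-1)}{2}$ is a positive integer. Then \[f\left(r,3,\tfrac{x(x-1)}{2}\right)\le \frac{x(x-1)(x-2)}{6}.\]
   Context: $\mathbb{N}^{(s)}$ denotes the family of all $s$-element subsets of $\mathbb{N}$. For integers $0\le k\le r$ and $b\ge 0$, $f(r,k,b)$ denotes the maximum of $|\mathcal{A}|$ over all pairs of families $\mathcal{A}\subset\mathbb{N}^{(r)}$, $\mathcal{B}\subset\mathbb{N}^{(r-1)}$ with $|\mathcal{B}|=b$ such that for every $A\in\mathcal{A}$ there exist $k$ distinct sets $B_1,\dots,B_k\in\mathcal{B}$ with $B_i\subset A$ for all $i$. *)

From HB Require Import structures.
From mathcomp Require Import all_boot all_order all_algebra.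
From mathcomp Require Import finmap.
From mathcomp Require Import reals.
Set Implicit Arguments. Unset Strict Implicit. Unset Printing Implicit Defensive.
Import Order.TTheory GRing.Theory Num.Theory.
Local Open Scope fset_scope.

Definition admissible (r k b : nat) (A B : {fset {fset nat}}) : Prop :=
  [/\ (forall S, S \in A -> #|` S| = r),
      (forall T, T \in B -> #|` T| = r.-1),
      #|` B| = b &
      (forall S, S \in A -> k <= #|` [fset T in B | T `<=` S]|)%N ].

(* Every [S] in [A] contains at least three members of [B], so
   [3 |A| <= Phi], where [Phi] counts pairs [T \in B], [T \subset S \in A].
   It suffices to show [Phi <= (x - 2) b], by strong induction on [b].
   Deleting a vertex [v] of the ground set [V] of [B] removes the [d v]
   members of [B] through [v] and all sets of [A] through [v]; the new
   parameter [x'] satisfies [x'(x' - 1)/2 = b - d v].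
   - Each [T \in B] lies in at most [|V| - r + 1] sets [S = T + w], so
     [Phi <= b (|V| - r + 1)], which suffices when [|V| - r + 1 <= x - 2].
   - If [d v < x - 1], two members of [B] through [v] lie in at most one
     common [S], so the sets through [v] contribute at most [3 d (d - 1)/2];
     with the induction hypothesis this is an inequality between the
     real numbers [x], [x'] and [d].
   - Otherwise every deletion has [x' <= x - 1]; summing the induction
     hypothesis over all vertices, each [S] is counted [|V| - r] times and
     each [T] [|V| - r + 1] times, giving
     [(|V| - r) Phi <= (x - 3) b (|V| - r + 1)], which yields the bound. *)

From HB Require Import structures.
From mathcomp Require Import all_boot all_order all_algebra.
From mathcomp Require Import finmap.
From mathcomp Require Import reals.
From mathcomp Require Import zify ring lra.
Import Order.TTheory GRing.Theory Num.Theory.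
Set Implicit Arguments. Unset Strict Implicit. Unset Printing Implicit Defensive.

Lemma le_of_mul_pred_le (R : realFieldType) (p c b k : R) :
  (1 < k -> c < k -> 0 <= b -> p * (k - 1) <= (c - 1) * (b * k) -> p <= c * b)%R.
Proof. by move=> *; nra. Qed.

Section Binom2Root.
Variable R : rcfType.
Local Open Scope ring_scope.
Implicit Types (x y z d : R).

Definition binom2_root y := (1 + Num.sqrt (1 + 8 * y)) / 2.

Lemma binom2_root_ge1 y : 0 <= y -> 1 <= binom2_root y.
Proof.
move=> y_ge0; suff : 1 <= Num.sqrt (1 + 8 * y) by rewrite /binom2_root; lra.
by rewrite -[X in X <= _](sqrtr1 R) ler_sqrt; lra.
Qed.

Lemma binom2_rootK y : 0 <= y -> binom2_root y * (binom2_root y - 1) / 2 = y.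
Proof.
move=> y_ge0; have /sqr_sqrtr : 0 <= 1 + 8 * y by lra.
by rewrite expr2 /binom2_root; lra.
Qed.

Lemma le_of_binom2_le x z : 1 <= z -> x * (x - 1) <= z * (z - 1) -> x <= z.
Proof. by move=> z_ge1 xz; rewrite leNgt; apply/negP => zx; nra. Qed.

Lemma le_binom2_root z y : 1 <= z -> z * (z - 1) / 2 <= y -> z <= binom2_root y.
Proof.
move=> z_ge1 zy; have y_ge0 : 0 <= y by nra.
apply: le_of_binom2_le; first exact: binom2_root_ge1.
have := binom2_rootK y_ge0; lra.
Qed.

Lemma binom2_root_le z y : 1 <= z -> 0 <= y -> y <= z * (z - 1) / 2 ->
  binom2_root y <= z.
Proof.
move=> z_ge1 y_ge0 yz; apply: le_of_binom2_le => //.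
have := binom2_rootK y_ge0; lra.
Qed.

Lemma binom2_root_unique x : 1 <= x -> binom2_root (x * (x - 1) / 2) = x.
Proof.
move=> x_ge1; apply/le_anti/andP; split; last exact: le_binom2_root.
by apply: binom2_root_le => //; nra.
Qed.

Lemma binom2_root_small_step y d : 0 <= d -> d <= y -> d <= binom2_root y - 1 ->
  (binom2_root (y - d) - 2) * (y - d) + 3 * d * (d - 1) / 2
    <= (binom2_root y - 2) * y.
Proof.
move=> d_ge0 dy dx; have y_ge0 : 0 <= y by lra.
have yd_ge0 : 0 <= y - d by lra.
set x := binom2_root y in dx *; set z := binom2_root (y - d).
have x_ge1 : 1 <= x := binom2_root_ge1 y_ge0.
have z_ge1 : 1 <= z := binom2_root_ge1 yd_ge0.
have xy : x * (x - 1) / 2 = y := binom2_rootK y_ge0.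
have zy : z * (z - 1) / 2 = y - d := binom2_rootK yd_ge0.
have zx : z <= x by apply: binom2_root_le; lra.
have xz : x - 1 <= z.
  have [x_lt2|x_ge2] := ltrP x 2; first lra.
  by apply: le_binom2_root; nra.
(* The defect factors through [t = x - z], which lies in [0, 1]. *)
rewrite -subr_ge0; have -> : (x - 2) * y - ((z - 2) * (y - d) + 3 * d * (d - 1) / 2)
  = (x - z) * (1 - (x - z)) * (3 * (x + z - 1) ^+ 2 - 1 - (x - z)) / 8.
  by rewrite -zy -xy [d](_ : _ = x * (x - 1) / 2 - z * (z - 1) / 2); [field | lra].
have t_ge0 : 0 <= x - z by lra.
have t_le1 : x - z <= 1 by lra.
apply: divr_ge0 => //; apply: mulr_ge0; first by apply: mulr_ge0; lra.
rewrite expr2; nra.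
Qed.

Lemma binom2_root_large_step y d : 1 <= d -> d <= y -> binom2_root y - 1 <= d ->
  binom2_root (y - d) <= binom2_root y - 1.
Proof.
move=> d_ge1 dy xd; have y_ge0 : 0 <= y by lra.
have xy := binom2_rootK y_ge0; set x := binom2_root y in xd xy *.
have x_ge2 : 2 <= x by apply: le_of_binom2_le; [exact: binom2_root_ge1 | lra].
apply: binom2_root_le; [lra | lra | nra].
Qed.

End Binom2Root.

Local Open Scope fset_scope.

Section FsetCard.
Variable K : choiceType.
Implicit Types (X Y S T : {fset K}).

Lemma card_fset_sep X (P : pred K) :
  #|` [fset x in X | P x]| = (\sum_(x <- X) P x)%N.
Proof.
rewrite card_fset_sum1 -big_fset_condE big_mkcond /=.
by apply: eq_bigr => x _; case: (P x).
Qed.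

Lemma fsubset_card_eq X Y : X `<=` Y -> (#|` Y| <= #|` X|)%N -> X = Y.
Proof. by move=> XY YX; apply/eqP; rewrite eqEfcard XY YX. Qed.

Lemma fsubset_card_succ S T : T `<=` S -> #|` S| = (#|` T|).+1 ->
  exists2 w, w \in S `\` T & S = w |` T.
Proof.
move=> TS cardS.
have /cardfs1P [w STw] : #|` S `\` T| == 1%N by rewrite cardfsDS // cardS subSnn.
have wST : w \in S `\` T by rewrite STw inE.
exists w => //; move: wST; rewrite inE => /andP [wT wS].
apply/esym/fsubset_card_eq; first by rewrite fsubUset fsub1set wS TS.
by rewrite cardfsU1 wT cardS.
Qed.

Lemma card_succ_fsetU S T1 T2 : T1 != T2 -> #|` T1| = #|` T2| ->
  T1 `<=` S -> T2 `<=` S -> #|` S| = (#|` T1|).+1 -> S = T1 `|` T2.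
Proof.
move=> T12 cardT12 T1S T2S cardS.
apply/esym/fsubset_card_eq; first by rewrite fsubUset T1S T2S.
rewrite cardS; apply: fproper_ltn_card.
rewrite fproperEneq fsubsetUl andbT; apply: contra T12 => /eqP T1U.
apply/eqP/esym/fsubset_card_eq; last by rewrite cardT12.
by rewrite T1U fsubsetUr.
Qed.

Lemma card_ge2_distinct X : (2 <= #|` X|)%N ->
  exists x y, [/\ x \in X, y \in X & x != y].
Proof.
move=> X2; have /fset0Pn [x xX] : X != fset0 by rewrite -cardfs_gt0; lia.
have /fset0Pn [y /fsetD1P [yx yX]] : X `\ x != fset0.
  by rewrite -cardfs_gt0; move: X2; rewrite (cardfsD1 x) xX; lia.
by exists x, y; rewrite eq_sym.
Qed.

Lemma sum_pairs_neq X :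
  (\sum_(x <- X) \sum_(y <- X) (x != y) = #|` X| * (#|` X| - 1))%N.
Proof.
rewrite card_fset_sum1 big_distrl /= -card_fset_sum1.
rewrite big_seq [RHS]big_seq; apply: eq_bigr => x xX.
rewrite mul1n -card_fset_sep.
have -> : [fset y in X | x != y] = X `\ x.
  by apply/fsetP => y; rewrite !inE eq_sym andbC.
by rewrite (cardfsD1 x X) xX add1n subn1.
Qed.

Lemma sum_pairs_sep X (P : pred K) :
  (\sum_(x <- X) \sum_(y <- X) [&& x != y, P x & P y]
     = #|` [fset x in X | P x]| * (#|` [fset x in X | P x]| - 1))%N.
Proof.
rewrite -sum_pairs_neq -(big_fset_condE _ _ P) [RHS]big_mkcond.
apply: eq_bigr => x _; case: (P x) => /=; last by rewrite big1 // => y _; rewrite andbF.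
rewrite -(big_fset_condE _ _ P) [RHS]big_mkcond; apply: eq_bigr => y _.
by case: (P y); rewrite ?andbT ?andbF.
Qed.

End FsetCard.

Section Incidences.
Implicit Types (S T : {fset nat}) (A B : {fset {fset nat}}).

Definition below B S := [fset T in B | T `<=` S].
Definition incidences A B := (\sum_(S <- A) #|` below B S|)%N.
Definition vertices B := \bigcup_(T <- B) T.
Definition star B v := [fset T in B | v \in T].
Definition avoiding A v := [fset S in A | v \notin S].

Lemma fsub_vertices B T : T \in B -> T `<=` vertices B.
Proof. by move=> TB; apply: (bigfcup_sup (P := xpredT)). Qed.

Lemma card_star_gt0 B v : v \in vertices B -> (0 < #|` star B v|)%N.
Proof.
case/bigfcupP => T /andP [TB _] vT.
by rewrite cardfs_gt0; apply/fset0Pn; exists T; rewrite !inE TB.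
Qed.

Lemma card_avoiding_star B v : (#|` avoiding B v| + #|` star B v| = #|` B|)%N.
Proof.
rewrite !card_fset_sep card_fset_sum1 -big_split /=.
by apply: eq_bigr => T _; case: (v \in T).
Qed.

Lemma below_avoiding B S v : v \notin S -> below (avoiding B v) S = below B S.
Proof.
move=> vS; apply/fsetP => T; rewrite !inE.
case TS: (T `<=` S); rewrite ?andbF ?andbT //.
by case: (T \in B) => //=; apply: contra vS => /(fsubsetP TS).
Qed.

Lemma incidences_avoidingE A B v : incidences (avoiding A v) (avoiding B v)
  = (\sum_(S <- A | v \notin S) #|` below B S|)%N.
Proof.
rewrite /incidences [RHS]big_fset_condE; apply: eq_big_seq => S.
by rewrite inE => /andP [_ vS]; rewrite below_avoiding.
Qed.

Lemma incidences_avoiding A B v :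
  incidences A B = (incidences (avoiding A v) (avoiding B v)
                    + \sum_(S <- A | v \in S) #|` below B S|)%N.
Proof.
rewrite incidences_avoidingE /incidences (bigID (fun S => v \notin S)) /=.
by congr addn; apply: eq_bigl => S; rewrite negbK.
Qed.

Lemma card_mul_le_incidences r k b A B :
  admissible r k b A B -> (k * #|` A| <= incidences A B)%N.
Proof.
case=> _ _ _ Ak; rewrite card_fset_sum1 big_distrr /=.
rewrite big_seq [X in (_ <= X)%N]big_seq; apply: leq_sum => S SA.
by rewrite muln1 Ak.
Qed.

Variable r : nat.
Hypothesis r_gt0 : (0 < r)%N.

Let r_predK : r = r.-1.+1.
Proof. by rewrite prednK. Qed.

Lemma admissible_avoiding k b A B v : admissible r k b A B ->
  admissible r k (b - #|` star B v|) (avoiding A v) (avoiding B v).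
Proof.
case=> Ar Br <- Ak; split.
- by move=> S; rewrite inE => /andP [/Ar].
- by move=> T; rewrite inE => /andP [/Br].
- by rewrite -(card_avoiding_star B v) addnK.
- by move=> S; rewrite inE => /andP [SA vS]; rewrite -/(below _ S) below_avoiding ?Ak.
Qed.

Lemma below_fsetU k b A B S T1 T2 : admissible r k b A B -> S \in A ->
  T1 \in below B S -> T2 \in below B S -> T1 != T2 -> S = T1 `|` T2.
Proof.
case=> Ar Br _ _ SA; rewrite !inE => /andP [T1B T1S] /andP [T2B T2S] T12.
apply: card_succ_fsetU => //; first by rewrite !Br.
by rewrite Ar // Br // -r_predK.
Qed.

Lemma admissible_fsub_vertices k b A B S : admissible r k b A B -> (2 <= k)%N ->
  S \in A -> S `<=` vertices B.
Proof.
move=> adm k2 SA; have [_ _ _ Ak] := adm.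
have [T1 [T2 [T1S T2S T12]]] := card_ge2_distinct (leq_trans k2 (Ak S SA)).
rewrite (below_fsetU adm SA T1S T2S T12) fsubUset.
by move: T1S T2S; rewrite !inE => /andP [/fsub_vertices -> _] /andP [/fsub_vertices].
Qed.

Lemma incidences_le_vertices k b A B : admissible r k b A B -> (2 <= k)%N ->
  (incidences A B <= b * (#|` vertices B| - r.-1))%N.
Proof.
move=> adm k2; have [Ar Br <- _] := adm.
rewrite /incidences; under eq_bigr => S _ do rewrite card_fset_sep.
rewrite exchange_big /= card_fset_sum1 big_distrl /=.
rewrite big_seq [X in (_ <= X)%N]big_seq; apply: leq_sum => T TB.
rewrite mul1n -card_fset_sep -(Br T TB) -cardfsDS ?fsub_vertices //.
have img_le :
    (#|` [fset w |` T | w in vertices B `\` T]| <= #|` vertices B `\` T|)%N.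
  exact: leq_imfset_card.
apply: leq_trans img_le.
apply: fsubset_leq_card; apply/fsubsetP => S; rewrite !inE => /andP [SA TS].
have cardS : #|` S| = (#|` T|).+1 by rewrite Ar // Br // -r_predK.
have [w wST ->] := fsubset_card_succ TS cardS.
apply/imfsetP; exists w => //; move: wST; rewrite !inE => /andP [-> wS] /=.
exact: fsubsetP (admissible_fsub_vertices adm k2 SA) w wS.
Qed.

Lemma sum_card_avoiding B : {in B, forall T, #|` T| = r.-1} ->
  (\sum_(v <- vertices B) #|` avoiding B v| = #|` B| * (#|` vertices B| - r.-1))%N.
Proof.
move=> Br; under eq_bigr => v _ do rewrite card_fset_sep.
rewrite exchange_big /= card_fset_sum1 big_distrl /= big_seq [RHS]big_seq.
apply: eq_bigr => T TB; rewrite mul1n -card_fset_sep -(Br T TB).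
rewrite -cardfsDS ?fsub_vertices //.
by congr (#|` _|); apply/fsetP => w; rewrite !inE andbC.
Qed.

Lemma incidences_le_sum_avoiding A B : {in A, forall S, #|` S| = r} ->
  (incidences A B * (#|` vertices B| - r)
     <= \sum_(v <- vertices B) incidences (avoiding A v) (avoiding B v))%N.
Proof.
move=> Ar; under [X in (_ <= X)%N]eq_bigr => v _.
  rewrite incidences_avoidingE big_mkcond /=; over.
rewrite exchange_big /= /incidences big_distrl /=.
rewrite big_seq [X in (_ <= X)%N]big_seq; apply: leq_sum => S SA.
rewrite (eq_bigr (fun v => #|` below B S| * (v \notin S))%N); last first.
  by move=> v _; case: (v \notin S); rewrite ?muln1 ?muln0.
rewrite -big_distrr /= leq_mul2l -card_fset_sep; apply/orP; right.
have -> : [fset w in vertices B | w \notin S] = vertices B `\` S.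
  by apply/fsetP => w; rewrite !inE andbC.
by rewrite cardfsD -(Ar S SA) leq_sub2l // fsubset_leq_card // fsubsetIr.
Qed.

Lemma card_below_le_star k b A B S v : admissible r k b A B -> S \in A -> v \in S ->
  (#|` below B S| <= (#|` below (star B v) S|).+1)%N.
Proof.
case=> Ar Br _ _ SA vS.
have sub : below B S `<=` below (star B v) S `|` [fset S `\ v].
  apply/fsubsetP => T; rewrite !inE => /andP [TB TS].
  case vT: (v \in T); first by rewrite TB TS.
  rewrite andbF /=; apply/eqP/fsubset_card_eq.
    apply/fsubsetP => w wT; rewrite inE (fsubsetP TS w wT) andbT inE.
    by apply: contraFN vT => /eqP <-.
  by move: (cardfsD1 v S); rewrite vS add1n Ar // (Br T TB); lia.
apply: leq_trans (fsubset_leq_card sub) _.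
by rewrite cardfsU cardfs1 addn1 leq_subr.
Qed.

Lemma common_superset_le1 k b A B T1 T2 : admissible r k b A B ->
  T1 \in B -> T2 \in B -> T1 != T2 ->
  (\sum_(S <- A) ((T1 `<=` S) && (T2 `<=` S)) <= 1)%N.
Proof.
move=> adm T1B T2B T12.
rewrite -card_fset_sep -(cardfs1 (T1 `|` T2)) fsubset_leq_card //.
apply/fsubsetP => S; rewrite !inE => /and3P [SA T1S T2S]; apply/eqP.
by apply: (below_fsetU adm SA); rewrite // !inE ?T1B ?T2B.
Qed.

Lemma sum_star_incidences_le b A B v : admissible r 3 b A B ->
  (2 * \sum_(S <- A | v \in S) #|` below B S|
     <= 3 * (#|` star B v| * (#|` star B v| - 1)))%N.
Proof.
move=> adm; have [_ _ _ A3] := adm.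
pose p S := #|` below (star B v) S|.
(* [3 <= #|below B S| <= p S + 1] forces [p S >= 2]. *)
have below_le_pairs S : S \in A -> v \in S ->
    (2 * #|` below B S| <= 3 * (p S * (p S - 1)))%N.
  move=> SA vS; have := card_below_le_star adm SA vS; have := A3 S SA.
  by rewrite -/(below B S) -/(p S); nia.
apply: leq_trans (_ : _ <= 3 * \sum_(S <- A | v \in S) p S * (p S - 1))%N _.
  rewrite big_distrr [X in (_ <= X)%N]big_distrr /=.
  rewrite big_seq_cond [X in (_ <= X)%N]big_seq_cond.
  by apply: leq_sum => S /andP [SA vS]; apply: below_le_pairs.
rewrite leq_mul2l /= -sum_pairs_neq.
under eq_bigr do rewrite /p -sum_pairs_sep.
rewrite exchange_big /=; under eq_bigr do rewrite exchange_big /=.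
rewrite big_seq [X in (_ <= X)%N]big_seq; apply: leq_sum => T1 T1v.
rewrite big_seq [X in (_ <= X)%N]big_seq; apply: leq_sum => T2 T2v.
have [T1B T2B] : T1 \in B /\ T2 \in B.
  by move: T1v T2v; rewrite !inE => /andP [-> _] /andP [].
case: eqP => [_|/eqP T12]; first by rewrite big1.
apply: leq_trans (common_superset_le1 adm T1B T2B T12).
by rewrite big_mkcond /=; apply: leq_sum => S _; case: (v \in S).
Qed.

End Incidences.

Section IncidenceBound.
Variables (R : rcfType) (r : nat).
Hypothesis r_gt0 : (0 < r)%N.
Local Open Scope ring_scope.

Local Notation root b := (binom2_root (b%:R : R)).

Definition incidences_bounded (b : nat) (A B : {fset {fset nat}}) :=
  (incidences A B)%:R <= (root b - 2) * b%:R.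

Lemma incidences_bounded_fset0 b B : incidences_bounded b fset0 B.
Proof.
rewrite /incidences_bounded /incidences big_seq_fset0.
have [->|b_gt0] := posnP b; first by rewrite mulr0.
have b_ge1 : 1 <= b%:R :> R by rewrite ler1n.
by rewrite mulr_ge0 // subr_ge0; apply: le_binom2_root; lra.
Qed.

Lemma incidences_bounded_small_degree b A B v : admissible r 3 b A B ->
  v \in vertices B -> #|` star B v|%:R <= root b - 1 ->
  incidences_bounded (b - #|` star B v|) (avoiding A v) (avoiding B v) ->
  incidences_bounded b A B.
Proof.
move=> adm vV dx; have [_ _ cardB _] := adm.
have := sum_star_incidences_le r_gt0 v adm; have d_gt0 := card_star_gt0 vV.
have db : (#|` star B v| <= b)%N by rewrite -cardB -(card_avoiding_star B v) leq_addl.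
rewrite /incidences_bounded (incidences_avoiding A B v) natrD natrB //.
set d := #|` star B v| in dx d_gt0 db *.
rewrite -(ler_nat R) !natrM natrB // mulr1n => star_le IHv.
have dbR : d%:R <= b%:R :> R by rewrite ler_nat.
have := binom2_root_small_step (ler0n _ d) dbR dx; lra.
Qed.

Lemma incidences_avoiding_large_degree b A B v : admissible r 3 b A B ->
  v \in vertices B -> root b - 1 <= #|` star B v|%:R ->
  incidences_bounded (b - #|` star B v|) (avoiding A v) (avoiding B v) ->
  (incidences (avoiding A v) (avoiding B v))%:R
    <= (root b - 3) * #|` avoiding B v|%:R.
Proof.
move=> [_ _ cardB _] vV dx; rewrite /incidences_bounded.
have [d_gt0 cardBv] := (card_star_gt0 vV, card_avoiding_star B v).
have -> : (b - #|` star B v|)%N = #|` avoiding B v| by lia.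
have root_le : root #|` avoiding B v| <= root b - 1.
  have -> : #|` avoiding B v|%:R = b%:R - #|` star B v|%:R :> R.
    by rewrite -cardB -cardBv natrD addrK.
  apply: binom2_root_large_step => //; first by rewrite ler1n.
  by rewrite ler_nat -cardB -cardBv leq_addl.
by move=> /le_trans; apply; rewrite ler_wpM2r //; lra.
Qed.

Lemma incidences_bounded_large_degree b A B : admissible r 3 b A B ->
  3 <= root b -> root b - 2 < (#|` vertices B| - r.-1)%:R ->
  (forall v, v \in vertices B -> (incidences (avoiding A v) (avoiding B v))%:R
                                  <= (root b - 3) * #|` avoiding B v|%:R) ->
  incidences_bounded b A B.
Proof.
move=> [Ar Br cardB _] x_ge3 k_gt avoiding_le.
set k := (#|` vertices B| - r.-1)%N in k_gt.
have k_ge2 : (2 <= k)%N by rewrite -(ltr_nat R 1); lra.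
have sum_le : (incidences A B * (k - 1))%:R <= (root b - 3) * (b * k)%:R.
  have -> : (k - 1 = #|` vertices B| - r)%N by rewrite /k; lia.
  apply: le_trans (_ : _ <= \sum_(v <- vertices B)
                          (incidences (avoiding A v) (avoiding B v))%:R) _.
    by rewrite -natr_sum ler_nat incidences_le_sum_avoiding.
  have sumB : (\sum_(v <- vertices B) #|` avoiding B v| = b * k)%N.
    by rewrite -cardB; apply: sum_card_avoiding.
  rewrite -sumB natr_sum mulr_sumr.
  by rewrite big_seq [X in _ <= X]big_seq; apply: ler_sum => v /avoiding_le.
apply: (le_of_mul_pred_le (k := k%:R)) _ _ (ler0n _ _) _.
- by rewrite (ltr_nat R 1).
- lra.
- by move: sum_le; rewrite !natrM natrB ?mulr1n; [lra | exact: ltnW].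
Qed.

Lemma admissible_incidences_bounded b A B :
  admissible r 3 b A B -> incidences_bounded b A B.
Proof.
elim/ltn_ind: b A B => b IH A B adm; have [_ _ cardB A3] := adm.
have [->|[S SA]] := fset_0Vmem A; first exact: incidences_bounded_fset0.
have x_ge3 : 3 <= root b.
  have b_ge3 : (3 <= b)%N.
    by rewrite -cardB (leq_trans (A3 S SA)) // fsubset_leq_card // fset_sub.
  by apply: le_binom2_root; rewrite -(ler_nat R 3) in b_ge3; lra.
have IHv v : v \in vertices B ->
    incidences_bounded (b - #|` star B v|) (avoiding A v) (avoiding B v).
  move=> vV; apply: (IH (b - #|` star B v|)%N); last exact: admissible_avoiding.
  by have := card_star_gt0 vV; have := card_avoiding_star B v; lia.
have [k_le|k_gt] := lerP (#|` vertices B| - r.-1)%:R (root b - 2).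
  apply: le_trans (_ : (b * (#|` vertices B| - r.-1))%:R <= _).
    by rewrite ler_nat (incidences_le_vertices r_gt0 adm).
  by rewrite natrM mulrC ler_wpM2r.
have [/hasP [v vV dx]|/hasPn large] :=
  boolP (has (fun v => #|` star B v|%:R < root b - 1) (vertices B)).
  exact: incidences_bounded_small_degree adm vV (ltW dx) (IHv v vV).
apply: (incidences_bounded_large_degree adm x_ge3 k_gt) => v vV.
by apply: (incidences_avoiding_large_degree adm vV) (IHv v vV); rewrite leNgt large.
Qed.

End IncidenceBound.

Local Open Scope ring_scope.

Theorem mainTheorem4 (R : realType) (r : nat) (x : R) (b : nat)
    (A B : {fset {fset nat}}) :
  (3 <= r)%N -> 1 < x -> (0 < b)%N -> x * (x - 1) / 2 = b%:R ->
  admissible r 3 b A B ->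
  (#|` A|%fset)%:R <= x * (x - 1) * (x - 2) / 6.
Proof.
move=> r_ge3 x_gt1 _ xb adm.
have r_gt0 : (0 < r)%N by lia.
have := admissible_incidences_bounded R r_gt0 adm.
rewrite /incidences_bounded -xb binom2_root_unique; last exact: ltW.
have := card_mul_le_incidences adm; rewrite -(ler_nat R) natrM.
lra.
Qed.
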